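(* Let $K\ge1$, let $c\in T_K$, and let $M=\{s\in S(\theta): A_K+B_K\theta-c\le s\le c\}$, say $M=\{s_a,s_{a+1},\dots,s_b\}$ with $s_b=c$. Then the factor $P=\lambda(\delta(a))\lambda(\delta(a+1))\cdots\lambda(\delta(b-1))$ of $\Lambda_\theta$ is a palindrome and it occurs exactly once (namely as a suffix) in the prefix $\lambda(\delta(0))\lambda(\delta(1))\cdots\lambda(\delta(b-1))$ of $\Lambda_\theta$.
   Context: Fix an irrational $\theta$ with $1<\theta<2$. Let $S(\theta)=\{i+j\theta : i,j\in\mathbb{N}_0\}$ and let $s_0<s_1<s_2<\cdots$ be its elements in increasing order. Put $\delta(n)=s_{n+1}-s_n$. Let $\lambda$ be the map from the set of values $\{\delta(n):n\ge0\}$ to $\mathbb{N}_0$ that numbers the distinct values in order of first occurrence: $\lambda(\delta(0))=0$, and the $m$-th distinct value to appear in the sequence $\delta(0),\delta(1),\dots$ (counting from $m=0$) receives label $m$. The Lambda word is $\Lambda_\theta=\lambda(\delta(0))\lambda(\delta(1))\lambda(\delta(2))\cdots$. Every positive integer $K$ is either $K=\lfloor k\theta\rfloor+k$ or $K=\lfloor k/\theta\rfloor+k$ for a unique integer $k\ge1$ (and not both). In the first case set $(A_K,B_K)=(\lfloor k\theta\rfloor,k)$; in the second case set $(A_K,B_K)=(k,\lfloor k/\theta\rfloor)$. Define $N_K=\{s\in S(\theta): \min(A_K,B_K\theta)\le s\le \max(A_K,B_K\theta)\}$ and $T_K=\{s\in S(\theta): \max N_K\le s<\max N_{K+1}\}$.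 *)

From Stdlib Require Import Reals Lra Lia ZArith Arith.
Open Scope R_scope.

Definition irrational (t : R) : Prop :=
  forall p q : Z, q <> 0%Z -> t <> IZR p / IZR q.

Definition inS (t x : R) : Prop :=
  exists i j : nat, x = INR i + INR j * t.

Definition is_enum (t : R) (s : nat -> R) : Prop :=
  (forall n, s n < s (S n)) /\
  (forall n, inS t (s n)) /\
  (forall x, inS t x -> exists n, s n = x).

(* floor of a nonnegative real, as a natural number *)
Definition nfloor (x : R) : nat := Z.to_nat (Int_part x).

(* (A_K, B_K): K = floor(k t) + k  gives (floor(k t), k);
                K = floor(k / t) + k gives (k, floor(k / t)). *)
Definition AB_rel (t : R) (K A B : nat) : Prop :=
  (exists k : nat, (1 <= k)%nat /\ K = (nfloor (INR k * t) + k)%nat /\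
                   A = nfloor (INR k * t) /\ B = k) \/
  (exists k : nat, (1 <= k)%nat /\ K = (nfloor (INR k / t) + k)%nat /\
                   A = k /\ B = nfloor (INR k / t)).

(* N_K as a set, given A = A_K and B = B_K *)
Definition Nset (t : R) (A B : nat) (x : R) : Prop :=
  inS t x /\ Rmin (INR A) (INR B * t) <= x <= Rmax (INR A) (INR B * t).

Definition is_max (P : R -> Prop) (m : R) : Prop :=
  P m /\ forall x, P x -> x <= m.

(* c in T_K, given (A,B) = (A_K,B_K) and (A',B') = (A_{K+1},B_{K+1}) *)
Definition inT (t : R) (A B A' B' : nat) (c : R) : Prop :=
  inS t c /\ exists m1 m2, is_max (Nset t A B) m1 /\ is_max (Nset t A' B') m2 /\
                           m1 <= c < m2.

Definition delta (s : nat -> R) (n : nat) : R := s (S n) - s n.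

(* firstin d x m = least k < m with d k = x, or m if there is none *)
Fixpoint firstin (d : nat -> R) (x : R) (m : nat) : nat :=
  match m with
  | O => O
  | S m' => let r := firstin d x m' in
            if (r <? m')%nat then r
            else if Req_EM_T (d m') x then m' else m
  end.

Definition firstocc (d : nat -> R) (n : nat) : nat := firstin d (d n) (S n).

(* number of distinct values whose first occurrence lies before position m *)
Fixpoint count_new (d : nat -> R) (m : nat) : nat :=
  match m with
  | O => O
  | S m' => (count_new d m' + (if Nat.eqb (firstocc d m') m' then 1 else 0))%nat
  end.

(* Lambda word: label of d n = number of distinct values first occurring
   strictly before the first occurrence of the value d n *)
Definition Lambda (d : nat -> R) (n : nat) : nat := count_new d (firstocc d n).

From Stdlib Require Import Reals Lra Lia ZArith Arith.
Open Scope R_scope.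

(* Put R0 = A + B t (with A = A_K, B = B_K).  Because c lies
   below max N_{K+1}, every element i + j t <= c of S(t) has i <= A and
   j <= B, so x |-> R0 - x maps the window M = {s_a, ..., s_b} into itself.
   An increasing finite sequence whose value set is symmetric under
   x |-> R0 - x satisfies s_(b-k) = R0 - s_(a+k); hence the gap word of M is a
   palindrome.  If the same labels, i.e. the same gaps, occurred at an
   earlier position p < a, the points s_p, ..., s_(p+b-a) would be M shifted
   down by e = s_a - s_p > 0; both A - e and B t - e would then lie in S(t),
   which forces t to be rational. *)

Section Labels.

Variable d : nat -> R.

Lemma firstin_spec (x : R) (m : nat) :
  ((firstin d x m < m)%nat /\ d (firstin d x m) = x /\
     forall k, (k < firstin d x m)%nat -> d k <> x) \/
  (firstin d x m = m /\ forall k, (k < m)%nat -> d k <> x).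
Proof.
  induction m as [|m IH].
  - right; simpl; split; [reflexivity | intros; lia].
  - cbn [firstin].
    destruct (Nat.ltb_spec (firstin d x m) m) as [Hlt | Hge].
    + destruct IH as [[H1 [H2 H3]] | [H1 H2]]; [| lia].
      left; repeat split; auto.
    + destruct IH as [[H1 [H2 H3]] | [H1 H2]]; [lia |].
      destruct (Req_EM_T (d m) x) as [Heq | Hne].
      * left; repeat split; [lia | auto |]. intros k Hk. apply H2; lia.
      * right; split; [reflexivity |]. intros k Hk.
        destruct (Nat.eq_dec k m); [subst; auto | apply H2; lia].
Qed.

Lemma firstocc_spec (n : nat) :
  (firstocc d n <= n)%nat /\ d (firstocc d n) = d n /\
  forall k, (k < firstocc d n)%nat -> d k <> d n.
Proof.
  unfold firstocc.
  destruct (firstin_spec (d n) (S n)) as [[H1 [H2 H3]] | [_ H2]].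
  - repeat split; auto; lia.
  - exfalso; apply (H2 n); auto.
Qed.

Lemma firstocc_eq_iff (n m : nat) : firstocc d n = firstocc d m <-> d n = d m.
Proof.
  destruct (firstocc_spec n) as [_ [Fn Mn]].
  destruct (firstocc_spec m) as [_ [Fm Mm]].
  split.
  - intros E. rewrite <- Fn, <- Fm, E. reflexivity.
  - intros E.
    destruct (lt_eq_lt_dec (firstocc d n) (firstocc d m)) as [[Hlt | Heq] | Hgt];
      auto; exfalso.
    + apply (Mm _ Hlt). congruence.
    + apply (Mn _ Hgt). congruence.
Qed.

Lemma firstocc_idem (n : nat) : firstocc d (firstocc d n) = firstocc d n.
Proof. apply firstocc_eq_iff, firstocc_spec. Qed.

Lemma count_new_mono (m m' : nat) :
  (m <= m')%nat -> (count_new d m <= count_new d m')%nat.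
Proof. induction 1; auto. simpl. lia. Qed.

(* A first occurrence increments the counter, so [count_new] separates
   distinct first-occurrence positions. *)
Lemma count_new_first_lt (f g : nat) :
  firstocc d f = f -> (f < g)%nat -> (count_new d f < count_new d g)%nat.
Proof.
  intros Hf Hlt. apply Nat.lt_le_trans with (count_new d (S f)).
  - simpl. rewrite Hf, Nat.eqb_refl. lia.
  - apply count_new_mono; lia.
Qed.

Lemma Lambda_eq_iff (n m : nat) : Lambda d n = Lambda d m <-> d n = d m.
Proof.
  rewrite <- firstocc_eq_iff. unfold Lambda. split; [| intros E; rewrite E; reflexivity].
  intros E.
  destruct (lt_eq_lt_dec (firstocc d n) (firstocc d m)) as [[Hlt | Heq] | Hgt];
    auto; exfalso.
  - pose proof (count_new_first_lt _ _ (firstocc_idem n) Hlt). lia.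
  - pose proof (count_new_first_lt _ _ (firstocc_idem m) Hgt). lia.
Qed.

End Labels.

Lemma nfloor_spec (x : R) : 0 <= x -> INR (nfloor x) <= x < INR (nfloor x) + 1.
Proof.
  intros Hx. unfold nfloor.
  destruct (base_Int_part x) as [H1 H2].
  assert (Hz : (0 <= Int_part x)%Z).
  { destruct (Z_lt_le_dec (Int_part x) 0) as [Hneg | Hnn]; [| exact Hnn].
    assert (Hm : (Int_part x <= -1)%Z) by lia. apply IZR_le in Hm. lra. }
  rewrite INR_IZR_INZ, Z2Nat.id by exact Hz. lra.
Qed.

Definition near_line (t : R) (A B : nat) : Prop :=
  INR B * t < INR A + 1 /\ INR A < (INR B + 1) * t.

Lemma AB_rel_near_line (t : R) (K A B : nat) :
  0 < t -> AB_rel t K A B -> K = (A + B)%nat /\ near_line t A B.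
Proof.
  unfold near_line.
  intros Ht [[k [_ [HK [HA HB]]]] | [k [_ [HK [HA HB]]]]]; subst.
  - assert (Hkt : 0 <= INR k * t) by (apply Rmult_le_pos; [apply pos_INR | lra]).
    destruct (nfloor_spec _ Hkt). repeat split; lra.
  - assert (Hkt : 0 <= INR k / t).
    { unfold Rdiv; apply Rmult_le_pos; [apply pos_INR | left; apply Rinv_0_lt_compat; lra]. }
    destruct (nfloor_spec _ Hkt) as [H1 H2].
    set (f := INR (nfloor (INR k / t))) in *.
    assert (E : INR k / t * t = INR k) by (field; lra).
    assert (f * t <= INR k) by (rewrite <- E; apply Rmult_le_compat_r; lra).
    assert (INR k < (f + 1) * t) by (rewrite <- E; apply Rmult_lt_compat_r; lra).
    repeat split; [lia | lra | lra].
Qed.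

Lemma near_line_step (t : R) (A B A' B' : nat) :
  0 < t -> (A' + B' = A + B + 1)%nat ->
  near_line t A B -> near_line t A' B' ->
  (A' = S A /\ B' = B) \/ (A' = A /\ B' = S B).
Proof.
  unfold near_line. intros Ht HS [H1 H2] [H3 H4].
  destruct (le_lt_dec A' (A + 1)) as [Ha | Ha].
  - destruct (le_lt_dec A A') as [Hb | Hb].
    + destruct (Nat.eq_dec A' A); [right | left]; lia.
    + exfalso. assert (HB' : (B + 2 <= B')%nat) by lia.
      assert (HA' : (A' + 1 <= A)%nat) by lia.
      apply le_INR in HB', HA'. rewrite plus_INR in HB', HA'. simpl in HB', HA'.
      nra.
  - exfalso. assert (HB' : (B' + 1 <= B)%nat) by lia.
    assert (HA' : (A + 2 <= A')%nat) by lia.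
    apply le_INR in HB', HA'. rewrite plus_INR in HB', HA'. simpl in HB', HA'.
    nra.
Qed.

(* Every element of S(t) below max(A_{K+1}, B_{K+1} t) has coordinates at
   most (A_K, B_K): the next corner is below both A_K + 1 and (B_K + 1) t. *)
Lemma lattice_below_next_corner (t : R) (K A B A' B' i j : nat) :
  0 < t -> AB_rel t K A B -> AB_rel t (S K) A' B' ->
  INR i + INR j * t < Rmax (INR A') (INR B' * t) -> (i <= A /\ j <= B)%nat.
Proof.
  intros Ht HAB HAB' Hx.
  destruct (AB_rel_near_line t K A B Ht HAB) as [EK [N1 N2]].
  destruct (AB_rel_near_line t (S K) A' B' Ht HAB') as [EK' NL'].
  assert (Hcorner : Rmax (INR A') (INR B' * t) <= INR A + 1 /\
                    Rmax (INR A') (INR B' * t) <= (INR B + 1) * t).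
  { destruct NL' as [N3 N4].
    destruct (near_line_step t A B A' B' Ht ltac:(lia) (conj N1 N2) (conj N3 N4))
      as [[-> ->] | [-> ->]]; rewrite S_INR in *;
      unfold Rmax; destruct (Rle_dec _ _); split; lra. }
  pose proof (pos_INR i). pose proof (pos_INR j).
  assert (0 <= INR j * t) by (apply Rmult_le_pos; lra).
  split.
  - destruct (le_lt_dec i A) as [Hi | Hi]; auto. exfalso.
    apply le_INR in Hi. rewrite S_INR in Hi. lra.
  - destruct (le_lt_dec j B) as [Hj | Hj]; auto. exfalso.
    apply le_INR in Hj. rewrite S_INR in Hj.
    assert ((INR B + 1) * t <= INR j * t) by (apply Rmult_le_compat_r; lra).
    lra.
Qed.

Section Increasing.

Variable s : nat -> R.
Hypothesis s_incr : forall n, s n < s (S n).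

Lemma incr_strict (n m : nat) : (n < m)%nat -> s n < s m.
Proof. induction 1; [apply s_incr | specialize (s_incr m); lra]. Qed.

Lemma incr_reflect (n m : nat) : s n < s m -> (n < m)%nat.
Proof.
  intros H. destruct (lt_eq_lt_dec n m) as [[Hlt | Heq] | Hgt]; auto.
  - subst; lra.
  - pose proof (incr_strict _ _ Hgt). lra.
Qed.

Variables (a b : nat) (r : R).
Hypothesis a_le_b : (a <= b)%nat.
Hypothesis window_refl :
  forall n, (a <= n <= b)%nat -> exists m, (a <= m <= b)%nat /\ s m = r - s n.

Lemma mirror_in_window (n m : nat) :
  (a <= n <= b)%nat -> s m = r - s n -> (a <= m <= b)%nat.
Proof.
  intros Hn Hm. destruct (window_refl n Hn) as [m' [Hm' E]].
  replace m with m'; auto.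
  destruct (lt_eq_lt_dec m m') as [[Hlt | Heq] | Hgt]; auto;
    [pose proof (incr_strict _ _ Hlt) | pose proof (incr_strict _ _ Hgt)]; lra.
Qed.

(* Mirroring reverses order, so the mirror of the k-th point from the
   bottom is at most the k-th point from the top, and symmetrically. *)
Lemma mirror_from_bottom (k m : nat) :
  (k <= b - a)%nat -> s m = r - s (a + k)%nat -> (m <= b - k)%nat.
Proof.
  revert m. induction k as [| k IH]; intros m Hk Hm.
  - rewrite Nat.add_0_r in Hm. pose proof (mirror_in_window a m ltac:(lia) Hm). lia.
  - destruct (window_refl (a + k)%nat ltac:(lia)) as [m' [_ Em']].
    pose proof (IH m' ltac:(lia) Em').
    pose proof (incr_strict (a + k) (a + S k) ltac:(lia)).
    assert (Hlt : s m < s m') by lra.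
    apply incr_reflect in Hlt. lia.
Qed.

Lemma mirror_from_top (k m : nat) :
  (k <= b - a)%nat -> s m = r - s (b - k)%nat -> (a + k <= m)%nat.
Proof.
  revert m. induction k as [| k IH]; intros m Hk Hm.
  - rewrite Nat.sub_0_r in Hm. pose proof (mirror_in_window b m ltac:(lia) Hm). lia.
  - destruct (window_refl (b - k)%nat ltac:(lia)) as [m' [_ Em']].
    pose proof (IH m' ltac:(lia) Em').
    pose proof (incr_strict (b - S k) (b - k) ltac:(lia)).
    assert (Hlt : s m' < s m) by lra.
    apply incr_reflect in Hlt. lia.
Qed.

Lemma window_mirror (k : nat) :
  (k <= b - a)%nat -> s (b - k)%nat = r - s (a + k)%nat.
Proof.
  intros Hk.
  destruct (window_refl (a + k)%nat ltac:(lia)) as [m [Hm Em]].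
  pose proof (mirror_from_bottom k m Hk Em).
  assert (Em' : s (a + k)%nat = r - s (b - (b - m))%nat).
  { replace (b - (b - m))%nat with m by lia. lra. }
  pose proof (mirror_from_top (b - m) _ ltac:(lia) Em').
  replace (b - k)%nat with m by lia. exact Em.
Qed.

End Increasing.

Lemma equal_gaps_translate (s : nat -> R) (p a l : nat) :
  (forall i, (i < l)%nat -> delta s (p + i) = delta s (a + i)) ->
  forall i, (i <= l)%nat -> s (p + i)%nat = s (a + i)%nat - (s a - s p).
Proof.
  intros Hgap i. induction i as [| i IH]; intros Hi.
  - rewrite !Nat.add_0_r. ring.
  - pose proof (Hgap i ltac:(lia)) as G. unfold delta in G.
    replace (p + S i)%nat with (S (p + i)) by lia.
    replace (a + S i)%nat with (S (a + i)) by lia.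
    rewrite (IH ltac:(lia)) in G. lra.
Qed.

Lemma no_common_downshift (t e : R) (A B : nat) :
  irrational t -> 0 < t -> 0 < e ->
  inS t (INR A - e) -> inS t (INR B * t - e) -> False.
Proof.
  intros Hirr Ht He [i1 [j1 H1]] [i2 [j2 H2]].
  set (p := (Z.of_nat A - Z.of_nat i1 + Z.of_nat i2)%Z).
  set (q := (Z.of_nat B + Z.of_nat j1 - Z.of_nat j2)%Z).
  assert (Heq : IZR p = IZR q * t).
  { unfold p, q. rewrite minus_IZR, !plus_IZR, minus_IZR, <- !INR_IZR_INZ. nra. }
  destruct (Z.eq_dec q 0) as [Hz | Hz].
  - rewrite Hz in Heq. simpl in Heq.
    assert (0 <= INR j1 * t) by (apply Rmult_le_pos; [apply pos_INR | lra]).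
    pose proof (pos_INR i2). unfold p in Heq.
    rewrite plus_IZR, minus_IZR, <- !INR_IZR_INZ in Heq. nra.
  - apply (Hirr p q Hz). rewrite Heq. field. apply not_0_IZR; exact Hz.
Qed.

Section Window.

Variables (t c : R) (s : nat -> R) (A B a b : nat).
Hypothesis enum : is_enum t s.
Hypothesis below_c : forall i j, INR i + INR j * t <= c -> (i <= A /\ j <= B)%nat.
Hypothesis A_le_c : INR A <= c.
Hypothesis Bt_le_c : INR B * t <= c.
Hypothesis window :
  forall n, (a <= n <= b)%nat <-> (INR A + INR B * t - c <= s n <= c).
Hypothesis top : s b = c.

Lemma window_incr : forall n, s n < s (S n).
Proof. apply enum. Qed.

(* c = s_b itself lies in M since A + B t <= 2 c. *)
Lemma window_nonempty : (a <= b)%nat.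
Proof. assert (H := proj2 (window b)). rewrite top in H. specialize (H ltac:(lra)). lia. Qed.

Lemma window_point_index (x : R) :
  inS t x -> INR A + INR B * t - c <= x <= c -> exists n, (a <= n <= b)%nat /\ s n = x.
Proof.
  intros Hx Hw. destruct enum as [_ [_ Hsurj]].
  destruct (Hsurj x Hx) as [n Hn]. exists n. split; [apply window; lra | exact Hn].
Qed.

(* x = i + j t in M gives A + B t - x = (A - i) + (B - j) t in M. *)
Lemma window_symmetric (n : nat) :
  (a <= n <= b)%nat ->
  exists m, (a <= m <= b)%nat /\ s m = INR A + INR B * t - s n.
Proof.
  intros Hn. apply window in Hn.
  destruct enum as [_ [HS _]]. destruct (HS n) as [i [j Hij]].
  destruct (below_c i j ltac:(lra)) as [Hi Hj].
  apply window_point_index; [| lra].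
  exists (A - i)%nat, (B - j)%nat. rewrite !minus_INR by assumption. lra.
Qed.

(* The gaps inside M read the same backwards, because s_(b-k) = R0 - s_(a+k). *)
Lemma window_gaps_palindrome (i : nat) :
  (i < b - a)%nat -> delta s (a + i) = delta s (b - 1 - i).
Proof.
  intros Hi. unfold delta.
  pose proof (window_mirror s window_incr a b _ window_nonempty window_symmetric) as Mir.
  replace (S (b - 1 - i)) with (b - i)%nat by lia.
  replace (b - 1 - i)%nat with (b - S i)%nat by lia.
  replace (S (a + i)) with (a + S i)%nat by lia.
  rewrite (Mir i ltac:(lia)), (Mir (S i) ltac:(lia)). ring.
Qed.

Hypothesis irr : irrational t.
Hypothesis t_pos : 0 < t.

(* An earlier occurrence of the gap word of M would be M shifted down by
   e > 0, carrying the points A and B t of M to A - e and B t - e in S(t). *)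
Lemma window_gaps_unique (p : nat) :
  (p + (b - a) <= b)%nat ->
  (forall i, (i < b - a)%nat -> delta s (p + i) = delta s (a + i)) -> p = a.
Proof.
  intros Hp Hgap.
  destruct (lt_eq_lt_dec p a) as [[Hlt | Heq] | Hgt]; [exfalso | exact Heq | lia].
  pose proof (equal_gaps_translate s p a _ Hgap) as Tr.
  assert (He : 0 < s a - s p) by (pose proof (incr_strict s window_incr p a Hlt); lra).
  destruct enum as [_ [HS _]].
  destruct (window_point_index (INR A)) as [nA [HnA EA]];
    [exists A, 0%nat; simpl; ring | lra |].
  destruct (window_point_index (INR B * t)) as [nB [HnB EB]];
    [exists 0%nat, B; simpl; ring | lra |].
  pose proof (Tr (nA - a)%nat ltac:(lia)) as TA.
  pose proof (Tr (nB - a)%nat ltac:(lia)) as TB.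
  replace (a + (nA - a))%nat with nA in TA by lia.
  replace (a + (nB - a))%nat with nB in TB by lia.
  apply (no_common_downshift t (s a - s p) A B irr t_pos He).
  - rewrite <- EA, <- TA. apply HS.
  - rewrite <- EB, <- TB. apply HS.
Qed.

End Window.

Theorem lemma11 (t : R) (s : nat -> R) (K A B A' B' a b : nat) (c : R) :
  irrational t -> 1 < t < 2 ->
  is_enum t s ->
  (1 <= K)%nat ->
  AB_rel t K A B -> AB_rel t (S K) A' B' ->
  inT t A B A' B' c ->
  (forall n, (a <= n <= b)%nat <-> (INR A + INR B * t - c <= s n <= c)) ->
  s b = c ->
  let L := Lambda (delta s) in
  (* P = L(a) ... L(b-1) is a palindrome *)
  (forall i, (i < b - a)%nat -> L (a + i)%nat = L (b - 1 - i)%nat) /\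
  (* P occurs exactly once in L(0) ... L(b-1), namely as the suffix at a *)
  (forall p, (p + (b - a) <= b)%nat ->
     (forall i, (i < b - a)%nat -> L (p + i)%nat = L (a + i)%nat) -> p = a).
Proof.
  intros Hirr Ht Henum _ HAB HAB' [_ [m1 [m2 [[_ Hm1] [[[_ [_ Hm2]] _] [Hc1 Hc2]]]]]]
    Hwin Htop L.
  assert (Ht0 : 0 < t) by lra.
  (* c < max N_{K+1}, and A, B t belong to N_K so lie below c *)
  assert (Hbelow : forall i j, INR i + INR j * t <= c -> (i <= A /\ j <= B)%nat).
  { intros i j Hx. apply (lattice_below_next_corner t K A B A' B'); auto. lra. }
  assert (HA : INR A <= c).
  { enough (INR A <= m1) by lra. apply Hm1.
    split; [exists A, 0%nat; simpl; ring | split; [apply Rmin_l | apply Rmax_l]]. }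
  assert (HB : INR B * t <= c).
  { enough (INR B * t <= m1) by lra. apply Hm1.
    split; [exists 0%nat, B; simpl; ring | split; [apply Rmin_r | apply Rmax_r]]. }
  split.
  - intros i Hi. apply Lambda_eq_iff.
    exact (window_gaps_palindrome t c s A B a b Henum Hbelow HA HB Hwin Htop i Hi).
  - intros p Hp Hlab.
    apply (window_gaps_unique t c s A B a b Henum HA HB Hwin Hirr Ht0 p Hp).
    intros i Hi. apply (Lambda_eq_iff (delta s)), Hlab, Hi.
Qed.
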